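(* Let $n\le m$ and let $\alpha_1,\ldots,\alpha_n\in\mathbb{R}^m$ be linearly independent unit vectors; let $H_i=\{y\in\mathbb{R}^m:(y,\alpha_i)=0\}$ and consider the polyhedral cone $Q=\{y\in\mathbb{R}^m : (y,\alpha_i)\geqslant 0 \text{ for all } i=1,\ldots,n\}$ with walls $B_i=H_i\cap Q$. Let $\lambda_{min}$ be the minimal eigenvalue of the (positive definite) Gram matrix $\big((\alpha_i,\alpha_j)\big)_{i,j=1}^n$. Then the number of reflections of any billiard trajectory in $Q$ does not exceed $n!\left(\frac{4}{\lambda_{min}}\right)^{n-1}$.
   Context: A billiard trajectory in $Q$: a point particle moves with uniform (constant-velocity) motion in the interior of $Q$ and undergoes specular reflections at the walls $B_i$, i.e. upon hitting $B_i$ its velocity $v$ is replaced by $v-2(v,\alpha_i)\alpha_i$. If the trajectory reaches a corner $B_i\cap B_j$ with $i\neq j$, its further motion is not defined. $(\cdot,\cdot)$ denotes the Euclidean inner product. *)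

From HB Require Import structures.
From mathcomp Require Import all_boot all_order all_algebra.
From mathcomp Require Import reals.
Set Implicit Arguments. Unset Strict Implicit. Unset Printing Implicit Defensive.
Import Order.TTheory GRing.Theory Num.Theory.
Local Open Scope ring_scope.

Section Billiard.
Variables (R : realType) (m n : nat).

Definition dotv (u w : 'rV[R]_m) : R := \sum_(k < m) u 0 k * w 0 k.

Definition rows_mx (alpha : 'I_n -> 'rV[R]_m) : 'M[R]_(n, m) :=
  \matrix_(i < n, j < m) alpha i 0 j.

Definition gram (alpha : 'I_n -> 'rV[R]_m) : 'M[R]_n :=
  \matrix_(i < n, j < n) dotv (alpha i) (alpha j).

Definition in_interior (alpha : 'I_n -> 'rV[R]_m) (y : 'rV[R]_m) : Prop :=
  forall i, 0 < dotv y (alpha i).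

Definition reflect_at (alpha : 'I_n -> 'rV[R]_m) (i : 'I_n) (v : 'rV[R]_m) :=
  v - (2 * dotv v (alpha i)) *: alpha i.

(* A billiard trajectory in Q with (at least) N reflections:
   start x 0 in the interior of Q; on the j-th leg the particle moves
   uniformly with velocity v j, staying in the interior of Q, until it reaches
   x (j+1), a point of the wall B_(w j) not lying on any other wall
   (no corner), where the velocity is reflected. *)
Definition billiard_traj (alpha : 'I_n -> 'rV[R]_m) (N : nat)
    (x v : nat -> 'rV[R]_m) (w : nat -> 'I_n) : Prop :=
  in_interior alpha (x 0%N) /\
  forall j : nat, (j < N)%N ->
    [/\ exists2 t : R, 0 < t &
          x j.+1 = x j + t *: v j /\
          (forall s : R, 0 < s -> s < t -> in_interior alpha (x j + s *: v j)),
        dotv (x j.+1) (alpha (w j)) = 0,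
        (forall k : 'I_n, k != w j -> 0 < dotv (x j.+1) (alpha k)) &
        v j.+1 = reflect_at alpha (w j) (v j)].

End Billiard.

(* A reflection at wall i adds to the velocity v the kick t alpha_i, where
   t = -2 (v, alpha_i) > 0; it preserves |v|, and projecting v onto the span
   of the alpha_i does not change the reflections.  Argue by induction on the
   number n of walls, with bound F_n = n! (4/lam)^(n-1).  A stretch of the
   trajectory that avoids some wall is a trajectory for the other n - 1 walls,
   whose Gram matrix is still lam-coercive, so it has at most F_(n-1)
   reflections.  Once a stretch has hit every wall, each (v, alpha_i) is
   bounded by the kicks of the stretch, and lam |v|^2 <= sum_i (v, alpha_i)^2
   forces these kicks to add up to at least s = sqrt (lam |v|^2 / n).  On the
   other hand the kicks of the whole trajectory are the coordinates of
   v_end - v_0 in the basis alpha, so they add up to at most 2 n s / lam.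
   Cutting the trajectory into stretches that first hit all walls thus yields
   at most F_(n-1) (1 + 3 n / lam) <= F_n reflections, because lam <= 1. *)

From HB Require Import structures.
From mathcomp Require Import all_boot all_order all_algebra.
From mathcomp Require Import classical_sets reals.
From mathcomp Require Import ring lra zify.
Set Implicit Arguments. Unset Strict Implicit. Unset Printing Implicit Defensive.
Import Order.TTheory GRing.Theory Num.Theory.
Local Open Scope ring_scope.

(** * Inner products and quadratic forms *)

Lemma discr_le_of_ge0 (R : realFieldType) (a b c : R) : 0 <= a -> 0 <= c ->
  (forall r, 0 <= a + 2 * b * r + c * r ^+ 2) -> b ^+ 2 <= a * c.
Proof.
move=> a_ge0 c_ge0 pos.
have [c0|c_neq0] := eqVneq c 0.
  have [b0|b_neq0] := eqVneq b 0; first by rewrite b0 c0; nra.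
  have := pos (- (a + 1) / (2 * b)); rewrite c0 mul0r addr0.
  have -> : a + 2 * b * (- (a + 1) / (2 * b)) = -1.
    by field; rewrite ?mulf_neq0 ?pnatr_eq0.
  lra.
have c_gt0 : 0 < c by rewrite lt_def c_neq0.
have := pos (- b / c).
have -> : a + 2 * b * (- b / c) + c * (- b / c) ^+ 2 = (a * c - b ^+ 2) / c by field.
by rewrite pmulr_lge0 ?invr_gt0 // subr_ge0.
Qed.

Section InnerProduct.
Variables (R : realType) (m : nat).
Implicit Types u w : 'rV[R]_m.

Lemma dotvE u w : dotv u w = (u *m w^T) 0 0.
Proof. by rewrite /dotv !mxE; apply: eq_bigr => k _; rewrite mxE. Qed.

Lemma dotvC u w : dotv u w = dotv w u.
Proof. by rewrite /dotv; apply: eq_bigr => k _; rewrite mulrC. Qed.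

Lemma dotvDl u u' w : dotv (u + u') w = dotv u w + dotv u' w.
Proof. by rewrite /dotv -big_split; apply: eq_bigr => k _; rewrite mxE mulrDl. Qed.

Lemma dotvDr u w w' : dotv u (w + w') = dotv u w + dotv u w'.
Proof. by rewrite dotvC dotvDl !(dotvC _ u). Qed.

Lemma dotvZl a u w : dotv (a *: u) w = a * dotv u w.
Proof. by rewrite /dotv mulr_sumr; apply: eq_bigr => k _; rewrite mxE mulrA. Qed.

Lemma dotvZr a u w : dotv u (a *: w) = a * dotv u w.
Proof. by rewrite dotvC dotvZl dotvC. Qed.

Lemma dotvNl u w : dotv (- u) w = - dotv u w.
Proof. by rewrite -scaleN1r dotvZl mulN1r. Qed.

Lemma dotvBl u u' w : dotv (u - u') w = dotv u w - dotv u' w.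
Proof. by rewrite dotvDl dotvNl. Qed.

Lemma dotv0l w : dotv 0 w = 0.
Proof. by rewrite /dotv big1 // => k _; rewrite mxE mul0r. Qed.

Lemma dotv_suml (I : Type) (r : seq I) (P : pred I) (F : I -> 'rV[R]_m) w :
  dotv (\sum_(i <- r | P i) F i) w = \sum_(i <- r | P i) dotv (F i) w.
Proof. exact: (big_morph (fun u => dotv u w) (fun a b => dotvDl a b w) (dotv0l w)). Qed.

Lemma dotvv_ge0 u : 0 <= dotv u u.
Proof. by rewrite /dotv sumr_ge0 // => k _; rewrite -expr2 sqr_ge0. Qed.

Lemma dotvv_eq0 u : (dotv u u == 0) = (u == 0).
Proof.
apply/idP/eqP => [|->]; last by rewrite dotv0l.
rewrite /dotv psumr_eq0 => [/allP u0|k _]; last by rewrite -expr2 sqr_ge0.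
apply/rowP => k; have /= := u0 k (mem_index_enum k).
by rewrite -expr2 sqrf_eq0 mxE => /eqP.
Qed.

Lemma dotvv_gt0 u : u != 0 -> 0 < dotv u u.
Proof. by move=> u0; rewrite lt_def dotvv_eq0 u0 dotvv_ge0. Qed.

Lemma cauchy_schwarz u w : dotv u w ^+ 2 <= dotv u u * dotv w w.
Proof.
apply: discr_le_of_ge0; rewrite ?dotvv_ge0 // => r.
have := dotvv_ge0 (u + r *: w).
by rewrite !(dotvDl, dotvDr, dotvZl, dotvZr) (dotvC w u); nra.
Qed.

Lemma norm_dotv_le u w : 2 * `|dotv u w| <= dotv u u + dotv w w.
Proof.
have := dotvv_ge0 (u + w); have := dotvv_ge0 (u - w).
rewrite !(dotvDl, dotvDr, dotvBl) -scaleN1r !(dotvZl, dotvZr) (dotvC w u).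
by case: (lerP 0 (dotv u w)) => [/ger0_norm|/ltr0_norm] ->; lra.
Qed.

Lemma norm_dotv_unit u w : dotv u u = 1 -> dotv w w = 1 -> `|dotv u w| <= 1.
Proof. by move=> u1 w1; have := norm_dotv_le u w; rewrite u1 w1; lra. Qed.

End InnerProduct.

Section QuadraticForms.
Variable R : realType.

Lemma dotv_mulmxr p q (u : 'rV[R]_p) (x : 'rV[R]_q) (M : 'M[R]_(q, p)) :
  dotv u (x *m M) = dotv (u *m M^T) x.
Proof. by rewrite !dotvE trmx_mul mulmxA. Qed.

Lemma dotv_mulmxl p q (u : 'rV[R]_p) (x : 'rV[R]_q) (M : 'M[R]_(q, p)) :
  dotv (x *m M) u = dotv x (u *m M^T).
Proof. by rewrite dotvC dotv_mulmxr dotvC. Qed.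

Lemma mx_bounded p q (M : 'M[R]_(p, q)) :
  exists2 C, 0 <= C & forall y, dotv (y *m M) (y *m M) <= C * dotv y y.
Proof.
exists (\sum_(j < q) dotv (row j M^T) (row j M^T)) => [|y].
  by apply: sumr_ge0 => j _; apply: dotvv_ge0.
rewrite mulr_suml {1}/dotv; apply: ler_sum => j _.
have -> : (y *m M) 0 j = dotv y (row j M^T).
  by rewrite !mxE; apply: eq_bigr => i _; rewrite !mxE.
by rewrite -expr2 mulrC cauchy_schwarz.
Qed.

Lemma mx_form_bounded n (M : 'M[R]_n) :
  exists2 C, 0 <= C & forall y, `|dotv (y *m M) y| <= C * dotv y y.
Proof.
have [C C_ge0 hC] := mx_bounded M.
exists ((C + 1) / 2) => [|y]; first lra.
have := norm_dotv_le (y *m M) y; have := hC y; lra.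
Qed.

Variable n : nat.
Implicit Types (M : 'M[R]_n) (x y : 'rV[R]_n).

Definition psdmx M := forall x, 0 <= dotv (x *m M) x.

Lemma psd_cauchy_schwarz M x y : M^T = M -> psdmx M ->
  dotv (x *m M) y ^+ 2 <= dotv (x *m M) x * dotv (y *m M) y.
Proof.
move=> sM psdM; apply: discr_le_of_ge0 => // r.
have := psdM (x + r *: y).
rewrite mulmxDl -scalemxAl !(dotvDl, dotvDr, dotvZl, dotvZr).
by rewrite [dotv (y *m M) x]dotv_mulmxl sM (dotvC y); nra.
Qed.

(* Cauchy-Schwarz for the form gives [|x M|^2 <= C (x M x)], and
   [|x|^2 <= D |x M|^2] since [M] is invertible. *)
Lemma psd_unit_coercive M : M^T = M -> psdmx M -> M \in unitmx ->
  exists2 c, 0 < c & forall x, c * dotv x x <= dotv (x *m M) x.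
Proof.
move=> sM psdM Mu.
have [C C_ge0 hC] := mx_form_bounded M.
have [D D_ge0 hD] := mx_bounded (invmx M).
suff bound x : dotv x x <= D * C * dotv (x *m M) x.
  exists (D * C + 1)^-1 => [|x]; first by rewrite invr_gt0; nra.
  rewrite mulrC ler_pdivrMr; last nra.
  by have := bound x; have := psdM x; have := dotvv_ge0 x; nra.
set y := x *m M.
have y_bound : dotv y y <= C * dotv (x *m M) x.
  have [y0|y_neq0] := eqVneq y 0.
    by rewrite y0 dotv0l mulr_ge0.
  have := psd_cauchy_schwarz x y sM psdM.
  have := hC y; rewrite -/y ler_norml => /andP[_ yMy].
  have := dotvv_gt0 y_neq0; have := psdM x; rewrite -/y; nra.
have : dotv x x <= D * dotv y y by rewrite -{1 2}(mulmxK Mu x) hD.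
by rewrite -mulrA; move/le_trans; apply; rewrite ler_wpM2l.
Qed.

End QuadraticForms.

Section MinEigenvalue.
Variable R : realType.
Local Open Scope classical_set_scope.

(* The infimum of the Rayleigh quotient is an eigenvalue: otherwise [G - mu]
   would be invertible and positive semidefinite, hence coercive, and the
   infimum could be raised. *)
Lemma symmetric_min_eigenvalue n (G : 'M[R]_n.+1) : G^T = G ->
  exists2 mu, eigenvalue G mu & forall b, mu * dotv b b <= dotv (b *m G) b.
Proof.
move=> sG.
pose E := (fun b : 'rV[R]_n.+1 => dotv (b *m G) b / dotv b b) @` [set b | b != 0].
have [C _ hC] := mx_form_bounded G.
have E_lb : lbound E (- C).
  move=> _ [b /= b0 <-]; rewrite ler_pdivlMr ?dotvv_gt0 // mulNr.
  by have := hC b; rewrite ler_norml => /andP[].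
have E_ne0 : E !=set0.
  pose one : 'rV[R]_n.+1 := const_mx 1.
  exists (dotv (one *m G) one / dotv one one).
  exists one => //=; apply/eqP => /rowP /(_ ord0) /eqP.
  by rewrite !mxE oner_eq0.
have mu_lb b : inf E * dotv b b <= dotv (b *m G) b.
  have [->|b0] := eqVneq b 0; first by rewrite mul0mx !dotv0l mulr0.
  rewrite -ler_pdivlMr ?dotvv_gt0 //.
  by apply: ge_inf; [exists (- C) | exists b].
exists (inf E) => //; apply: contraT.
rewrite /eigenvalue /eigenspace negbK kermx_eq0 row_free_unit => Mu.
have sM : (G - (inf E)%:M)^T = G - (inf E)%:M by rewrite linearB /= sG tr_scalar_mx.
have formE (b : 'rV_n.+1) :
    dotv (b *m (G - (inf E)%:M)) b = dotv (b *m G) b - inf E * dotv b b.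
  by rewrite mulmxBr mul_mx_scalar dotvBl dotvZl.
have psdM : psdmx (G - (inf E)%:M) by move=> b; rewrite formE subr_ge0.
have [c c_gt0 hc] := psd_unit_coercive sM psdM Mu.
suff : inf E + c <= inf E by lra.
apply: lb_le_inf E_ne0 _ => _ [b /= b0 <-].
by rewrite ler_pdivlMr ?dotvv_gt0 // mulrDl; have := hc b; rewrite formE; lra.
Qed.

End MinEigenvalue.

(** * Gram matrices *)

Section RowsMx.
Variables (R : realType) (m n : nat) (alpha : 'I_n -> 'rV[R]_m).
Local Notation A := (rows_mx alpha).
Implicit Types (u : 'rV[R]_m) (b : 'rV[R]_n).

Lemma mul_delta_rows_mx i : delta_mx 0 i *m A = alpha i.
Proof. by rewrite -rowE; apply/rowP => j; rewrite !mxE. Qed.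

Lemma mul_tr_rows_mxE u i : (u *m A^T) 0 i = dotv u (alpha i).
Proof. by rewrite /dotv !mxE; apply: eq_bigr => j _; rewrite !mxE. Qed.

Lemma gram_rows_mx : gram alpha = A *m A^T.
Proof. by apply/matrixP => i j; rewrite !mxE; apply: eq_bigr => k _; rewrite !mxE. Qed.

Lemma dotv_mul_gram b : dotv (b *m (A *m A^T)) b = dotv (b *m A) (b *m A).
Proof. by rewrite mulmxA dotv_mulmxl trmxK. Qed.

Variable lam : R.
Hypothesis lam_gt0 : 0 < lam.
Hypothesis gram_coercive : forall b, lam * dotv b b <= dotv (b *m A) (b *m A).

Lemma coercive_gram_unit : A *m A^T \in unitmx.
Proof.
rewrite -row_free_unit; apply: inj_row_free => b /(congr1 (fun y => dotv y b)).
rewrite dotv_mul_gram dotv0l => bA0; apply/eqP; rewrite -dotvv_eq0 eq_le dotvv_ge0.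
by rewrite -(pmulr_rle0 _ lam_gt0) -bA0 gram_coercive.
Qed.

Lemma coercive_le1 : (forall i, dotv (alpha i) (alpha i) = 1) -> (0 < n)%N -> lam <= 1.
Proof.
move=> alpha_unit n_gt0; have := gram_coercive (delta_mx 0 (Ordinal n_gt0)).
rewrite mul_delta_rows_mx alpha_unit /dotv (bigD1 (Ordinal n_gt0)) //= big1.
  by rewrite !mxE eqxx addr0 mulr1 mulr1.
by move=> j /negbTE j_neq; rewrite !mxE j_neq andbF mul0r.
Qed.

Lemma span_coercive y : (y <= A)%MS -> lam * dotv y y <= \sum_i dotv y (alpha i) ^+ 2.
Proof.
move=> /submxP [b ->]; set c := b *m A *m A^T.
have cE : \sum_i dotv (b *m A) (alpha i) ^+ 2 = dotv c c.
  by rewrite [RHS]/dotv; apply: eq_bigr => i _; rewrite mul_tr_rows_mxE expr2.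
have yE : dotv (b *m A) (b *m A) = dotv b c by rewrite dotv_mulmxr dotvC.
rewrite cE; have [y0|y_neq0] := eqVneq (b *m A) 0.
  by rewrite y0 dotv0l mulr0 dotvv_ge0.
have y_gt0 := dotvv_gt0 y_neq0; rewrite yE in y_gt0 *.
rewrite -(ler_pM2r y_gt0) -mulrA -expr2.
apply: le_trans (ler_wpM2l (ltW lam_gt0) (cauchy_schwarz b c)) _.
by rewrite mulrA mulrC ler_wpM2l ?dotvv_ge0 // -yE gram_coercive.
Qed.

Hypothesis gram_unit : A *m A^T \in unitmx.

Definition span_proj : 'M[R]_m := A^T *m invmx (A *m A^T) *m A.

Lemma span_proj_sub u : (u *m span_proj <= A)%MS.
Proof. by rewrite /span_proj !mulmxA submxMl. Qed.

Lemma dotv_span_proj u i : dotv (u *m span_proj) (alpha i) = dotv u (alpha i).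
Proof.
rewrite -!mul_tr_rows_mxE /span_proj !mulmxA -(mulmxA _ A).
by rewrite mulmxKV.
Qed.

Lemma span_proj_rows i : alpha i *m span_proj = alpha i.
Proof.
by rewrite -mul_delta_rows_mx /span_proj !mulmxA -(mulmxA _ A) mulmxK.
Qed.

End RowsMx.

Lemma gram_coercive_lift (R : realType) m n (alpha : 'I_n.+1 -> 'rV[R]_m)
    (i0 : 'I_n.+1) (lam : R) :
  (forall b, lam * dotv b b <= dotv (b *m rows_mx alpha) (b *m rows_mx alpha)) ->
  forall b, lam * dotv b b <= dotv (b *m rows_mx (fun j => alpha (lift i0 j)))
                                   (b *m rows_mx (fun j => alpha (lift i0 j))).
Proof.
move=> coercive b'; pose b := \row_i oapp (b' 0) 0 (unlift i0 i).
have bE : dotv b b = dotv b' b'.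
  rewrite {1}/dotv (bigD1_ord i0) //= !mxE unlift_none mul0r add0r.
  by apply: eq_bigr => j _; rewrite !mxE liftK.
have bAE : b *m rows_mx alpha = b' *m rows_mx (fun j => alpha (lift i0 j)).
  apply/rowP => c; rewrite !mxE (bigD1_ord i0) //= !mxE unlift_none mul0r add0r.
  by apply: eq_bigr => j _; rewrite !mxE liftK.
by rewrite -bE -bAE.
Qed.

Lemma gram_eigenvalue_gt0 (R : realType) m n (alpha : 'I_n -> 'rV[R]_m) (mu : R) :
  row_free (rows_mx alpha) -> eigenvalue (gram alpha) mu -> 0 < mu.
Proof.
rewrite gram_rows_mx => free /eigenvalueP [y yG y_neq0].
have yA_neq0 : y *m rows_mx alpha != 0 by rewrite mulmx_free_eq0.
have := dotvv_gt0 yA_neq0; rewrite -dotv_mul_gram yG dotvZl.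
by rewrite pmulr_lgt0 // dotvv_gt0.
Qed.

Lemma gram_min_eigenvalue_coercive (R : realType) m n (alpha : 'I_n.+1 -> 'rV[R]_m)
    (lam : R) : (forall mu, eigenvalue (gram alpha) mu -> lam <= mu) ->
  forall b, lam * dotv b b <= dotv (b *m rows_mx alpha) (b *m rows_mx alpha).
Proof.
rewrite gram_rows_mx => lam_min b; rewrite -dotv_mul_gram.
have [|mu mu_eig mu_le] := symmetric_min_eigenvalue (G := rows_mx alpha *m (rows_mx alpha)^T).
  by rewrite trmx_mul trmxK.
by apply: le_trans (mu_le b); rewrite ler_wpM2r ?dotvv_ge0 ?lam_min.
Qed.

(** * Reflection sequences *)

Definition reflection_sequence (R : realType) m n (alpha : 'I_n -> 'rV[R]_m) (L : nat)
    (v : nat -> 'rV[R]_m) (w : nat -> 'I_n) : Prop :=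
  forall j, (j < L)%N ->
    dotv (v j) (alpha (w j)) < 0 /\ v j.+1 = reflect_at alpha (w j) (v j).

Lemma reflection_sequence_proj (R : realType) m n (alpha : 'I_n -> 'rV[R]_m) L v w :
  rows_mx alpha *m (rows_mx alpha)^T \in unitmx -> reflection_sequence alpha L v w ->
  reflection_sequence alpha L (fun l => v l *m span_proj alpha) w.
Proof.
move=> gram_unit hseq j /hseq [neg ->]; rewrite dotv_span_proj //; split => //.
by rewrite /reflect_at mulmxBl -scalemxAl span_proj_rows // dotv_span_proj.
Qed.

Lemma billiard_traj_reflection_sequence (R : realType) m n (alpha : 'I_n -> 'rV[R]_m)
    N x v w : billiard_traj alpha N x v w -> reflection_sequence alpha N v w.
Proof.
move=> [_ traj] j jN; have [[t t_gt0 [xS inside]] hit _ vS] := traj j jN.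
split => //; have := inside (t / 2) ltac:(lra) ltac:(lra) (w j).
by move: hit; rewrite xS !(dotvDl, dotvZl); nra.
Qed.

Lemma reflection_sequence_restrict (R : realType) m n (alpha : 'I_n.+2 -> 'rV[R]_m)
    L v w (i0 : 'I_n.+2) a l :
  reflection_sequence alpha L v w -> (a + l <= L)%N ->
  (forall r, (a <= r < a + l)%N -> w r != i0) ->
  exists w', reflection_sequence (fun j => alpha (lift i0 j)) l (fun j => v (a + j)%N) w'.
Proof.
move=> hseq hal avoid; exists (fun j => odflt ord0 (unlift i0 (w (a + j)%N))) => j jl.
have /avoid : (a <= a + j < a + l)%N by rewrite leq_addr ltn_add2l.
have /hseq : (a + j < L)%N by apply: leq_trans hal; rewrite ltn_add2l.
by rewrite addnS; case: unliftP => [k -> | ->]; rewrite ?eqxx.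
Qed.

Section ReflectionSequence.
Variables (R : realType) (m k : nat) (alpha : 'I_k -> 'rV[R]_m).
Hypothesis alpha_unit : forall i, dotv (alpha i) (alpha i) = 1.
Variables (L : nat) (v : nat -> 'rV[R]_m) (w : nat -> 'I_k).
Hypothesis hseq : reflection_sequence alpha L v w.
Local Notation A := (rows_mx alpha).

Definition tau l := - 2 * dotv (v l) (alpha (w l)).

Lemma tau_gt0 l : (l < L)%N -> 0 < tau l.
Proof. by move=> /hseq [neg _]; rewrite /tau; lra. Qed.

Lemma sum_tau_ge0 a b : (b <= L)%N -> 0 <= \sum_(a <= r < b) tau r.
Proof.
move=> bL; rewrite big_nat_cond sumr_ge0 // => r /andP[/andP[_ rb] _].
by rewrite ltW // tau_gt0 // (leq_trans rb).
Qed.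

Lemma velocity_succ l : (l < L)%N -> v l.+1 = v l + tau l *: alpha (w l).
Proof. by move=> /hseq [_ ->]; rewrite /reflect_at /tau -scaleNr mulNr. Qed.

Lemma dotv_velocity_succ l : (l < L)%N -> dotv (v l.+1) (alpha (w l)) = tau l / 2.
Proof. by move=> lL; rewrite velocity_succ // dotvDl dotvZl alpha_unit /tau; field. Qed.

Lemma wall_change j : (j.+1 < L)%N -> w j.+1 != w j.
Proof.
move=> jL; have [neg _] := hseq jL; apply: contraTneq neg => ->.
by rewrite -leNgt dotv_velocity_succ ?(ltnW jL) // divr_ge0 ?ltW ?tau_gt0 ?(ltnW jL).
Qed.

Lemma dotv_velocity_const l : (l <= L)%N -> dotv (v l) (v l) = dotv (v 0) (v 0).
Proof.
elim: l => // l IH lL; rewrite -IH ?(ltnW lL) // velocity_succ //.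
by rewrite !(dotvDl, dotvDr, dotvZl, dotvZr) alpha_unit (dotvC (alpha _)) /tau; ring.
Qed.

Definition shift_coef a b : 'rV[R]_k := \sum_(a <= r < b) tau r *: delta_mx 0 (w r).

Lemma velocity_shift a b : (a <= b <= L)%N -> v b = v a + shift_coef a b *m A.
Proof.
have shift_coef_nil c : v c = v c + shift_coef c c *m A.
  by rewrite /shift_coef big_geq ?mul0mx ?addr0.
elim: b => [|b IH] /andP[ab bL]; first by case: a ab.
move: ab; rewrite leq_eqVlt => /orP[/eqP <- //|]; rewrite ltnS => ab.
rewrite velocity_succ // IH ?ab ?(ltnW bL) // /shift_coef big_nat_recr //=.
by rewrite mulmxDl -scalemxAl mul_delta_rows_mx addrA.
Qed.

Lemma dotv_shift_coef_mul a b u :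
  dotv (shift_coef a b *m A) u = \sum_(a <= r < b) tau r * dotv (alpha (w r)) u.
Proof.
rewrite mulmx_suml dotv_suml; apply: eq_bigr => r _.
by rewrite -scalemxAl mul_delta_rows_mx dotvZl.
Qed.

Lemma dotv_shift_coef_const a b : dotv (shift_coef a b) (const_mx 1) = \sum_(a <= r < b) tau r.
Proof.
rewrite dotv_suml; apply: eq_bigr => r _; rewrite dotvZl /dotv (bigD1 (w r)) //= big1.
  by rewrite !mxE !eqxx addr0 !mulr1.
by move=> i /negbTE i_neq; rewrite !mxE i_neq andbF mul0r.
Qed.

Variable lam : R.
Hypothesis lam_gt0 : 0 < lam.
Hypothesis gram_coercive : forall b : 'rV[R]_k, lam * dotv b b <= dotv (b *m A) (b *m A).

Lemma shift_coef_bound a b : (a <= b <= L)%N ->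
  lam * dotv (shift_coef a b) (shift_coef a b) <= 4 * dotv (v 0) (v 0).
Proof.
move=> /andP[ab bL]; apply: le_trans (gram_coercive _) _.
set D := shift_coef a b *m A; have aL := leq_trans ab bL.
have := dotv_velocity_const bL; rewrite (velocity_shift (a := a)) ?ab // -/D.
rewrite -(dotv_velocity_const aL) !(dotvDl, dotvDr) (dotvC D) => vDE.
have := cauchy_schwarz (v a) D; rewrite (dotv_velocity_const aL) in vDE *.
have := dotvv_ge0 D; have := dotvv_ge0 (v 0); nra.
Qed.

Lemma sum_tau_bound a b : (a <= b <= L)%N ->
  lam * (\sum_(a <= r < b) tau r) ^+ 2 <= 4 * k%:R * dotv (v 0) (v 0).
Proof.
move=> abL; rewrite -dotv_shift_coef_const.
have := cauchy_schwarz (shift_coef a b) (const_mx 1).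
have -> : dotv (const_mx 1 : 'rV[R]_k) (const_mx 1) = k%:R.
  by rewrite /dotv (eq_bigr (fun=> 1)) ?sumr_const ?card_ord // => i _; rewrite !mxE mulr1.
have := shift_coef_bound abL; have := ltW lam_gt0; have : 0 <= k%:R :> R := ler0n _ _.
nra.
Qed.

(* After its last hit at time [l], wall [i] sees [(v, alpha i) = tau l / 2], and
   each later kick moves this by at most its size. *)
Lemma entry_bound a b i : (a <= b)%N -> (b < L)%N ->
  (exists2 l, (a <= l <= b)%N & w l = i) ->
  `|dotv (v b) (alpha i)| <= \sum_(a <= r < b) tau r + tau b / 2.
Proof.
move=> ab bL [l /andP[al]]; rewrite leq_eqVlt => /orP[/eqP -> <-|lb <-].
  have -> : dotv (v b) (alpha (w b)) = - (tau b / 2) by rewrite /tau; field.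
  by rewrite normrN ger0_norm ?lerDr ?sum_tau_ge0 ?(ltnW bL) // divr_ge0 ?ltW ?tau_gt0.
have lL := ltn_trans lb bL.
rewrite (velocity_shift (a := l.+1)) ?lb ?(ltnW bL) //.
rewrite dotvDl dotv_velocity_succ // dotv_shift_coef_mul.
have later : `|\sum_(l.+1 <= r < b) tau r * dotv (alpha (w r)) (alpha (w l))|
    <= \sum_(l.+1 <= r < b) tau r.
  apply: le_trans (ler_norm_sum _ _ _) _; rewrite big_nat_cond [leRHS]big_nat_cond.
  apply: ler_sum => r /andP[/andP[_ rb] _]; have tau_r := tau_gt0 (ltn_trans rb bL).
  rewrite normrM gtr0_norm //; apply: ler_piMr; [exact: ltW | exact: norm_dotv_unit].
have -> : \sum_(a <= r < b) tau r
    = \sum_(a <= r < l) tau r + (tau l + \sum_(l.+1 <= r < b) tau r).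
  by rewrite (big_cat_nat al (ltnW lb)) /= (big_ltn lb).
have := sum_tau_ge0 a (ltnW lL); have := tau_gt0 lL; have := tau_gt0 bL.
move=> tau_b tau_l before; apply: le_trans (ler_normD _ _) _.
by rewrite ger0_norm; lra.
Qed.

Hypothesis v0_sub : (v 0 <= A)%MS.

Lemma covering_window_bound a b : (a <= b)%N -> (b < L)%N ->
  (forall i, exists2 l, (a <= l <= b)%N & w l = i) ->
  lam * dotv (v 0) (v 0) <= k%:R * (\sum_(a <= r < b) tau r + tau b / 2) ^+ 2.
Proof.
move=> ab bL covered; rewrite -(dotv_velocity_const (ltnW bL)).
apply: le_trans (span_coercive lam_gt0 gram_coercive _) _.
  by rewrite (velocity_shift (a := 0)) ?(ltnW bL) // addmx_sub ?submxMl.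
set M := \sum_(a <= r < b) tau r + tau b / 2.
have M_ge0 : 0 <= M.
  by rewrite addr_ge0 ?sum_tau_ge0 ?(ltnW bL) // divr_ge0 ?ltW ?tau_gt0.
have -> : k%:R * M ^+ 2 = \sum_(i < k) M ^+ 2 by rewrite sumr_const card_ord mulr_natl.
apply: ler_sum => i _.
by rewrite -real_normK ?num_real // ler_sqr ?nnegrE ?normr_ge0 ?entry_bound.
Qed.

(** * Counting reflections *)

Hypothesis k_gt1 : (1 < k)%N.
Variable F : R.
Hypothesis missing_wall_bound : forall a l, (a + l <= L)%N ->
  (exists i0, forall r, (a <= r < a + l)%N -> w r != i0) -> l%:R <= F.

Definition walls_hit a e := [forall i, has (fun r => w r == i) (index_iota a e)].

Lemma walls_hitP a e :
  reflect (forall i, exists2 r, (a <= r < e)%N & w r = i) (walls_hit a e).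
Proof.
apply: (iffP forallP) => [hit i | hit i].
  by have /hasP [r] := hit i; rewrite mem_index_iota => ? /eqP; exists r.
by have [r ? <-] := hit i; apply/hasP; exists r; rewrite ?mem_index_iota.
Qed.

Lemma walls_not_hit_bound a l : (a + l <= L)%N -> ~~ walls_hit a (a + l) -> l%:R <= F.
Proof.
move=> alL; rewrite negb_forall => /existsP [i0 nhit]; apply: missing_wall_bound alL _.
exists i0 => r ar; apply: contra nhit => /eqP wr.
by apply/hasP; exists r; rewrite ?mem_index_iota ?wr.
Qed.

Lemma walls_hit_gap a e : walls_hit a e -> (a.+1 < e)%N.
Proof.
move=> /walls_hitP hit; have [r0 /andP[ar0 r0e] w0] := hit (Ordinal (ltnW k_gt1)).
have [r1 /andP[ar1 r1e] w1] := hit (Ordinal k_gt1).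
have : r0 != r1 by apply/eqP => r01; move: w0; rewrite r01 w1 => /(congr1 val).
lia.
Qed.

Lemma first_walls_hit a e : walls_hit a e ->
  exists2 b, (a < b < e)%N & ~~ walls_hit a b /\ walls_hit a b.+1.
Proof.
elim: e => [|e IH] hit; first by have := walls_hit_gap hit.
have [hit_e|nhit_e] := boolP (walls_hit a e).
  by have [b /andP[ab be] ?] := IH hit_e; exists b; rewrite // ab (ltn_trans be).
by exists e; rewrite // ltnSn andbT -ltnS walls_hit_gap.
Qed.

Definition covering_rate := Num.sqrt (lam * dotv (v 0) (v 0) / k%:R).
Local Notation s := covering_rate.

Lemma covering_rate_sqr : s ^+ 2 * k%:R = lam * dotv (v 0) (v 0).
Proof.
have k_neq0 : k%:R != 0 :> R by rewrite pnatr_eq0 -lt0n (ltnW k_gt1).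
rewrite sqr_sqrtr ?divfK // divr_ge0 ?ler0n // mulr_ge0 ?dotvv_ge0 //.
exact: ltW.
Qed.

Lemma covering_rate_le a b : (a <= b)%N -> (b < L)%N -> walls_hit a b.+1 ->
  s <= \sum_(a <= r < b) tau r + tau b / 2.
Proof.
move=> ab bL /walls_hitP hit.
have M_ge0 : 0 <= \sum_(a <= r < b) tau r + tau b / 2.
  by rewrite addr_ge0 ?sum_tau_ge0 ?(ltnW bL) // divr_ge0 ?ltW ?tau_gt0.
rewrite -(ler_sqr (sqrtr_ge0 _) M_ge0) -(@ler_pM2r _ k%:R) ?ltr0n ?(ltnW k_gt1) //.
by rewrite covering_rate_sqr [leRHS]mulrC; apply: covering_window_bound.
Qed.

(* Weighting every kick but the first by 3/2 lets a window [a, b] that hits all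
   walls pay its cost [\sum_(a <= r < b) tau r + tau b / 2] out of
   [potential a e - potential b e]. *)
Definition potential a e := \sum_(a <= r < e) tau r + 2^-1 * \sum_(a.+1 <= r < e) tau r.

Lemma potential_ge0 a e : (e <= L)%N -> 0 <= potential a e.
Proof. by move=> eL; rewrite addr_ge0 ?mulr_ge0 ?sum_tau_ge0 ?invr_ge0 ?ler0n. Qed.

Lemma potential_split a b e : (a < b < e)%N -> potential a e =
  (\sum_(a <= r < b) tau r + tau b / 2) + 2^-1 * \sum_(a.+1 <= r < b) tau r + potential b e.
Proof.
move=> /andP[ab be]; rewrite /potential (big_cat_nat (ltnW ab) (ltnW be)).
by rewrite (big_cat_nat ab (ltnW be)) /= (big_ltn be); ring.
Qed.

Lemma F_ge0 : 0 <= F.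
Proof.
by apply: (missing_wall_bound (a := 0) (l := 0)) => //; exists (Ordinal (ltnW k_gt1)).
Qed.

Lemma potential_bound l a : (a + l <= L)%N -> s * l%:R <= F * (s + potential a (a + l)).
Proof.
elim/ltn_ind: l a => l IH a alL.
have s_ge0 : 0 <= s := sqrtr_ge0 _.
have [hit|nhit] := boolP (walls_hit a (a + l)); last first.
  apply: le_trans (ler_wpM2l s_ge0 (walls_not_hit_bound alL nhit)) _.
  by rewrite mulrC ler_wpM2l ?F_ge0 // lerDl potential_ge0.
have [b /andP[ab bal] [nhit hitS]] := first_walls_hit hit.
have bL : (b < L)%N := leq_trans bal alL.
have d_le : (b - a)%:R <= F.
  by apply: (walls_not_hit_bound (a := a)); rewrite subnKC ?(ltnW ab) ?(ltnW bL).
have rest : s * (a + l - b)%:R <= F * (s + potential b (a + l)).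
  by have := IH (a + l - b)%N _ b; rewrite subnKC ?(ltnW bal) //; apply; lia.
have lE : l%:R = (b - a)%:R + (a + l - b)%:R :> R by rewrite -natrD; congr _%:R; lia.
have cover := covering_rate_le (ltnW ab) bL hitS.
have := sum_tau_ge0 a.+1 (ltnW bL).
rewrite lE mulrDr (potential_split (b := b)) ?ab //= => later_ge0.
apply: le_trans (lerD (ler_wpM2l s_ge0 d_le) rest) _.
by rewrite (mulrC s F) -mulrDr ler_wpM2l ?F_ge0 //; lra.
Qed.

Lemma sum_tau_le_covering_rate : lam * \sum_(0 <= r < L) tau r <= 2 * k%:R * s.
Proof.
have lhs_ge0 := mulr_ge0 (ltW lam_gt0) (sum_tau_ge0 0 (leqnn L)).
have rhs_ge0 : 0 <= 2 * k%:R * s by rewrite !mulr_ge0 ?ler0n ?sqrtr_ge0.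
rewrite -ler_sqr //.
have -> : (2 * k%:R * s) ^+ 2 = lam * (4 * k%:R * dotv (v 0) (v 0)).
  by rewrite mulrCA -covering_rate_sqr; ring.
rewrite exprMn [lam ^+ 2]expr2 -[lam * lam * _]mulrA.
apply: ler_wpM2l; first exact: ltW.
exact: (sum_tau_bound (a := 0) (b := L) (leqnn L)).
Qed.

Lemma reflection_count_step : L%:R <= F * (4 * k%:R / lam).
Proof.
have k_gt0 := ltnW k_gt1.
have lam_le1 : lam <= 1 := coercive_le1 gram_coercive alpha_unit k_gt0.
have k_ge1 : 1 <= k%:R :> R by rewrite ler1n.
have [->|L_gt0] := posnP L.
  by rewrite mulr_ge0 ?F_ge0 // divr_ge0 ?mulr_ge0 ?ler0n ?ltW.
have v0_neq0 : v 0 != 0.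
  by apply: contraTneq (proj1 (hseq L_gt0)) => ->; rewrite dotv0l ltxx.
have s_gt0 : 0 < s by rewrite sqrtr_gt0 divr_gt0 ?ltr0n ?mulr_gt0 ?dotvv_gt0.
have sum_le := sum_tau_le_covering_rate.
have pot_le : potential 0 L <= 3 / 2 * \sum_(0 <= r < L) tau r.
  rewrite /potential (big_ltn L_gt0).
  by have := tau_gt0 L_gt0; have := sum_tau_ge0 1 (leqnn L); lra.
have key : lam * (s + potential 0 L) <= 4 * k%:R * s.
  have : lam * s <= k%:R * s by rewrite ler_pM2r //; lra.
  have := ler_wpM2l (ltW lam_gt0) pot_le; lra.
have := potential_bound (a := 0) (l := L) (leqnn L); rewrite add0n => pot_bound.
rewrite -(ler_pM2l (mulr_gt0 lam_gt0 s_gt0)).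
have -> : lam * s * (F * (4 * k%:R / lam)) = F * (4 * k%:R * s).
  by field; rewrite gt_eqF.
rewrite -mulrA; apply: le_trans (ler_wpM2l (ltW lam_gt0) pot_bound) _.
by rewrite mulrCA ler_wpM2l ?F_ge0.
Qed.

End ReflectionSequence.

Lemma reflection_sequence_bound (R : realType) m n (alpha : 'I_n.+1 -> 'rV[R]_m)
    (lam : R) L v w :
  0 < lam -> (forall i, dotv (alpha i) (alpha i) = 1) ->
  (forall b, lam * dotv b b <= dotv (b *m rows_mx alpha) (b *m rows_mx alpha)) ->
  reflection_sequence alpha L v w -> L%:R <= (n.+1)`!%:R * (4 / lam) ^+ n.
Proof.
elim: n alpha L v w => [|n IH] alpha L v w lam_gt0 alpha_unit coercive hseq.
  rewrite expr0 mulr1 ler_nat leqNgt; apply/negP => L_gt1.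
  by have := wall_change alpha_unit hseq L_gt1; rewrite !ord1 eqxx.
have -> : (n.+2)`!%:R * (4 / lam) ^+ n.+1
    = (n.+1)`!%:R * (4 / lam) ^+ n * (4 * n.+2%:R / lam).
  by rewrite factS natrM exprS; ring.
have proj_seq := reflection_sequence_proj (coercive_gram_unit lam_gt0 coercive) hseq.
apply: (reflection_count_step alpha_unit proj_seq lam_gt0 coercive) => //.
  exact: span_proj_sub.
move=> a l alL [i0 avoid]; have [w' hseq'] := reflection_sequence_restrict proj_seq alL avoid.
by apply: IH hseq' => // b; apply: gram_coercive_lift.
Qed.

Theorem theorem1 (R : realType) (m n : nat) (alpha : 'I_n -> 'rV[R]_m)
  (hn1 : (1 <= n)%N) (hnm : (n <= m)%N)
  (hunit : forall i, dotv (alpha i) (alpha i) = 1)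
  (hfree : row_free (rows_mx alpha))
  (lam : R) (hlam : eigenvalue (gram alpha) lam)
  (hlammin : forall mu : R, eigenvalue (gram alpha) mu -> lam <= mu) :
  forall (N : nat) (x v : nat -> 'rV[R]_m) (w : nat -> 'I_n),
    billiard_traj alpha N x v w ->
    (N%:R <= (n`!)%:R * (4 / lam) ^+ (n.-1) :> R).
Proof.
move=> N x v w traj.
(* [hnm] is a consequence of [hfree]. *)
case: n alpha hn1 hnm hunit hfree lam hlam hlammin w traj => // n alpha _ _ hunit hfree
  lam hlam hlammin w traj.
apply: (reflection_sequence_bound (gram_eigenvalue_gt0 hfree hlam) hunit).
  exact: gram_min_eigenvalue_coercive.
exact: billiard_traj_reflection_sequence traj.
Qed.
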